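(* Let $(\mathscr{S},\mathscr{C},\mathscr{R},K)$ be a PL-RDK system with kinetic order vectors $T_{.y}$. Suppose there exist $\kappa\in\mathbb{R}^{\mathscr{R}}_{>0}$ and a nonzero $\mu\in\mathbb{R}^{\mathscr{S}}$ that is stoichiometrically compatible with $S$ such that $$\sum_{y\to y'\in\mathscr{R}}\kappa_{y\to y'}(y'-y)=0,\qquad \sum_{y\to y'\in\mathscr{R}}\kappa_{y\to y'}e^{T_{.y}\cdot\mu}(y'-y)=0.$$ Then there exist positive rate constants $\{k_{y\to y'}\}_{y\to y'\in\mathscr{R}}$ (with the kinetic orders unchanged) and two distinct positive, stoichiometrically compatible vectors $c^*,c^{**}\in\mathbb{R}^{\mathscr{S}}_{>0}$ which are both equilibria of the resulting power-law system.
   Context: A chemical reaction network $(\mathscr{S},\mathscr{C},\mathscr{R})$ has finite sets of species, complexes (vectors in $\mathbb{R}^{\mathscr{S}}_{\ge0}$) and reactions $y\to y'$; its stoichiometric subspace is $S=\mathrm{span}\{y'-y: y\to y'\in\mathscr{R}\}$. A power-law kinetics assigns to each reaction $r$ the rate $K_r(x)=k_r x^{F_r}=k_r\prod_s x_s^{F_{rs}}$ with rate constant $k_r>0$ and real kinetic order row $F_r\in\mathbb{R}^{\mathscr{S}}$. The system is PL-RDK (power-law reactant-determined kinetics) if any two reactions with the same reactant complex have identical kinetic order rows; then for each reactant complex $y$ one writes $T_{.y}\in\mathbb{R}^{\mathscr{S}}$ for this common row. The dynamics is $dx/dt=f(x)=\sum_{y\to y'\in\mathscr{R}}k_{y\to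 y'}x^{T_{.y}}(y'-y)$; an equilibrium is a zero of $f$. Two vectors $x,x^*$ are stoichiometrically compatible if $x-x^*\in S$. A vector $x\in\mathbb{R}^{\mathscr{S}}$ is stoichiometrically compatible with $S$ if there is $\sigma\in S$ with $\mathrm{sign}(x_s)=\mathrm{sign}(\sigma_s)$ for all $s\in\mathscr{S}$. *)

From Stdlib Require Export Reals List.
Export ListNotations.
Open Scope R_scope.

(* Species are indexed by 0..n-1; a vector in R^S is a function nat -> R,
   of which only the components s < n are meaningful. *)
Definition Vec := nat -> R.

(* A reaction y -> y' is the pair (reactant complex y, product complex y'). *)
Definition Reaction := (Vec * Vec)%type.

Definition sumR (l : list R) : R := fold_right Rplus 0 l.

Definition dot (n : nat) (u v : Vec) : R :=
  sumR (map (fun s => u s * v s) (seq 0 n)).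

Definition is_network (n : nat) (rxns : list Reaction) : Prop :=
  NoDup rxns /\
  (forall r, In r rxns ->
     (forall s, (s < n)%nat -> 0 <= fst r s /\ 0 <= snd r s) /\
     (exists s, (s < n)%nat /\ fst r s <> snd r s)).

Definition reaction_sum (rxns : list Reaction) (c : Reaction -> R) (s : nat) : R :=
  sumR (map (fun r => c r * (snd r s - fst r s)) rxns).

Definition in_stoich (n : nat) (rxns : list Reaction) (v : Vec) : Prop :=
  exists a : Reaction -> R, forall s, (s < n)%nat -> v s = reaction_sum rxns a s.

Definition sgn (x : R) : R :=
  if Rlt_dec 0 x then 1 else if Rlt_dec x 0 then -1 else 0.

(* x is stoichiometrically compatible with S: same sign pattern as some sigma in S *)
Definition sign_compatible (n : nat) (rxns : list Reaction) (x : Vec) : Prop :=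
  exists sigma : Vec, in_stoich n rxns sigma /\
    forall s, (s < n)%nat -> sgn (x s) = sgn (sigma s).

(* power-law monomial x^F = prod_s x_s^{F_s}, for positive x *)
Definition monomial (n : nat) (x F : Vec) : R :=
  fold_right Rmult 1 (map (fun s => Rpower (x s) (F s)) (seq 0 n)).

(* PL-RDK dynamics: kinetic order row T y depends only on the reactant complex y *)
Definition plrdk_rhs (n : nat) (rxns : list Reaction) (T : Vec -> Vec)
    (k : Reaction -> R) (x : Vec) (s : nat) : R :=
  reaction_sum rxns (fun r => k r * monomial n x (T (fst r))) s.

Definition is_equilibrium (n : nat) (rxns : list Reaction) (T : Vec -> Vec)
    (k : Reaction -> R) (x : Vec) : Prop :=
  forall s, (s < n)%nat -> plrdk_rhs n rxns T k x s = 0.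

(* Given an equilibrium-type identity for [kappa] and a second one in which each
   reaction is reweighted by [exp (T y . mu)], choose rate constants
   [k r = kappa r / c2^(T y)].  Then [c2] is an equilibrium by the first identity,
   and [c1 = c2 * exp mu] (componentwise) is one by the second, because
   [c1^(T y) = c2^(T y) * exp (T y . mu)].  It remains to choose [c2 > 0] with
   [c2 * (exp mu - 1) = sigma] for some [sigma] in the stoichiometric subspace; this
   is possible exactly when [sigma] has the sign pattern of [mu]. *)

From Stdlib Require Import Reals List Lra Lia.
Open Scope R_scope.

Lemma sgn_eq_cases (a b : R) : sgn a = sgn b ->
  (0 < a -> 0 < b) /\ (a < 0 -> b < 0) /\ (a = 0 -> b = 0).
Proof.
  unfold sgn; destruct (Rlt_dec 0 a), (Rlt_dec a 0), (Rlt_dec 0 b), (Rlt_dec b 0);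
    intros; repeat split; intros; lra.
Qed.

Lemma sgn_eq_neq0 (a b : R) : sgn a = sgn b -> a <> 0 -> b <> 0.
Proof.
  intros Hsgn Ha; destruct (sgn_eq_cases _ _ Hsgn) as [Hpos [Hneg _]].
  destruct (Rtotal_order a 0) as [|[|]]; [specialize (Hneg ltac:(lra)) | contradiction
    | specialize (Hpos ltac:(lra))]; lra.
Qed.

Lemma exp_neq1 (m : R) : m <> 0 -> exp m <> 1.
Proof. intros Hm E; apply Hm; rewrite <- exp_0 in E; exact (exp_inv _ _ E). Qed.

(* The positive [c] with [c * (exp m - 1) = sig]; when [m = 0] (so [sig = 0])
   any positive value does. *)
Definition split_low (sig m : R) : R :=
  if Req_EM_T m 0 then 1 else sig / (exp m - 1).

Lemma split_low_pos (sig m : R) : sgn m = sgn sig -> 0 < split_low sig m.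
Proof.
  intros Hsgn; destruct (sgn_eq_cases _ _ Hsgn) as [Hpos [Hneg _]].
  unfold split_low; destruct (Req_EM_T m 0) as [|Hm]; [lra|].
  destruct (Rlt_or_le 0 m) as [Hm_pos|Hm_le].
  - assert (1 < exp m) by (rewrite <- exp_0; apply exp_increasing; lra).
    apply Rdiv_lt_0_compat; [apply Hpos; lra | lra].
  - assert (exp m < 1) by (rewrite <- exp_0; apply exp_increasing; lra).
    replace (sig / (exp m - 1)) with (- sig / (1 - exp m)) by (field; lra).
    apply Rdiv_lt_0_compat; [specialize (Hneg ltac:(lra)); lra | lra].
Qed.

Lemma split_low_scale_sub (sig m : R) : sgn m = sgn sig ->
  split_low sig m * exp m - split_low sig m = sig.
Proof.
  intros Hsgn; destruct (sgn_eq_cases _ _ Hsgn) as [_ [_ Hzero]].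
  unfold split_low; destruct (Req_EM_T m 0) as [Hm|Hm].
  - rewrite Hzero, Hm, exp_0 by exact Hm; ring.
  - pose proof (exp_neq1 m Hm); field; lra.
Qed.

Lemma monomial_pos (n : nat) (x F : Vec) : 0 < monomial n x F.
Proof.
  unfold monomial; induction (seq 0 n) as [|s l IH]; simpl; [lra|].
  apply Rmult_lt_0_compat; [apply exp_pos | exact IH].
Qed.

Lemma prod_Rpower_scale_exp (l : list nat) (x F mu : Vec) :
  (forall s, In s l -> 0 < x s) ->
  fold_right Rmult 1 (map (fun s => Rpower (x s * exp (mu s)) (F s)) l) =
  fold_right Rmult 1 (map (fun s => Rpower (x s) (F s)) l) *
  exp (sumR (map (fun s => F s * mu s) l)).
Proof.
  induction l as [|s l IH]; simpl; intros Hx.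
  - rewrite exp_0; ring.
  - rewrite IH by (intros; apply Hx; auto).
    unfold Rpower; rewrite ln_mult, ln_exp by (auto using exp_pos).
    rewrite Rmult_plus_distr_l, !exp_plus; ring.
Qed.

Lemma monomial_scale_exp (n : nat) (x F mu : Vec) :
  (forall s, (s < n)%nat -> 0 < x s) ->
  monomial n (fun s => x s * exp (mu s)) F = monomial n x F * exp (dot n F mu).
Proof.
  intros Hx; apply prod_Rpower_scale_exp.
  intros s Hs; apply in_seq in Hs; apply Hx; lia.
Qed.

Lemma reaction_sum_ext (rxns : list Reaction) (f g : Reaction -> R) (s : nat) :
  (forall r, f r = g r) -> reaction_sum rxns f s = reaction_sum rxns g s.
Proof.
  intros Hfg; unfold reaction_sum; f_equal; apply map_ext; intros; rewrite Hfg; auto.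
Qed.

Section Rescaled_rates.

Variables (n : nat) (rxns : list Reaction) (T : Vec -> Vec) (kappa : Reaction -> R).
Variable x : Vec.

Definition rescaled_rates (r : Reaction) : R := kappa r / monomial n x (T (fst r)).

Lemma plrdk_rhs_rescaled (s : nat) :
  plrdk_rhs n rxns T rescaled_rates x s = reaction_sum rxns kappa s.
Proof.
  apply reaction_sum_ext; intros r; unfold rescaled_rates.
  field; apply Rgt_not_eq, monomial_pos.
Qed.

Lemma plrdk_rhs_rescaled_scale_exp (mu : Vec) (s : nat) :
  (forall s, (s < n)%nat -> 0 < x s) ->
  plrdk_rhs n rxns T rescaled_rates (fun s => x s * exp (mu s)) s =
  reaction_sum rxns (fun r => kappa r * exp (dot n (T (fst r)) mu)) s.
Proof.
  intros Hx; apply reaction_sum_ext; intros r; unfold rescaled_rates.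
  rewrite monomial_scale_exp by exact Hx.
  field; apply Rgt_not_eq, monomial_pos.
Qed.

End Rescaled_rates.

Theorem lemma2p2 (n : nat) (rxns : list Reaction) (T : Vec -> Vec)
    (kappa : Reaction -> R) (mu : Vec) :
  is_network n rxns ->
  (forall r, In r rxns -> 0 < kappa r) ->
  (exists s, (s < n)%nat /\ mu s <> 0) ->
  sign_compatible n rxns mu ->
  (forall s, (s < n)%nat -> reaction_sum rxns kappa s = 0) ->
  (forall s, (s < n)%nat ->
     reaction_sum rxns (fun r => kappa r * exp (dot n (T (fst r)) mu)) s = 0) ->
  exists (k : Reaction -> R) (c1 c2 : Vec),
    (forall r, In r rxns -> 0 < k r) /\
    (forall s, (s < n)%nat -> 0 < c1 s /\ 0 < c2 s) /\
    (exists s, (s < n)%nat /\ c1 s <> c2 s) /\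
    in_stoich n rxns (fun s => c1 s - c2 s) /\
    is_equilibrium n rxns T k c1 /\
    is_equilibrium n rxns T k c2.
Proof.
  intros _ Hkappa [s0 [Hs0 Hmu0]] [sigma [[a Hsigma] Hsgn]] Heq_kappa Heq_exp.
  set (c2 := fun s => split_low (sigma s) (mu s)).
  set (c1 := fun s => c2 s * exp (mu s)).
  assert (Hc2 : forall s, (s < n)%nat -> 0 < c2 s)
    by (intros s Hs; apply split_low_pos, Hsgn, Hs).
  assert (Hdiff : forall s, (s < n)%nat -> c1 s - c2 s = sigma s)
    by (intros s Hs; apply split_low_scale_sub, Hsgn, Hs).
  exists (rescaled_rates n T kappa c2), c1, c2.
  split; [|split; [|split; [|split; [|split]]]].
  - intros r Hr; apply Rdiv_lt_0_compat; [auto | apply monomial_pos].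
  - intros s Hs; split; [apply Rmult_lt_0_compat; auto using exp_pos | auto].
  - exists s0; split; [exact Hs0|]; intros E.
    apply (sgn_eq_neq0 _ _ (Hsgn s0 Hs0) Hmu0).
    rewrite <- (Hdiff s0 Hs0), E; ring.
  - exists a; intros s Hs; rewrite Hdiff; auto.
  - intros s Hs; unfold c1; rewrite plrdk_rhs_rescaled_scale_exp; auto.
  - intros s Hs; rewrite plrdk_rhs_rescaled; auto.
Qed.
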